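(* There is an absolute constant $C$ such that for every countable $X$, $f:X^n\to\{0,1\}$, $\varepsilon,\eta\in(0,1)$, distribution $\mathcal D$ on $X$, and integer $m\ge Cn^2/\varepsilon^2$, setting $f'=f\circ\Phi_{m\to n}$, $$\big|\mathrm{AdaptiveAddMax}_\eta(f',\mathcal D)-\mathrm{BinomialMax}_\eta(f',\mathcal D)\big|\le\varepsilon.$$
   Context: $\Phi_{m\to n}$ outputs the entries of its input $S\in X^m$ at a uniformly random sequence of $n$ distinct indices. For $S\in X^{\lceil(1-\eta)m\rceil}$, $\mathrm{add}_\eta(S)$ is the set of samples in $X^m$ obtained by adding $\lfloor\eta m\rfloor$ arbitrary points to $S$ and arbitrarily permuting; $\mathrm{AdaptiveAddMax}_\eta(g,\mathcal D)=\mathbb E_{S\sim\mathcal D^{\lceil(1-\eta)m\rceil}}[\sup_{S'\in\mathrm{add}_\eta(S)}\mathbb E[g(S')]]$ for randomized $g:X^m\to\{0,1\}$. For a sample $S$ with $|S|\le m$, $\mathrm{complete}_m(S)$ is the set of samples in $X^m$ obtained by adding $m-|S|$ arbitrary points to $S$ and arbitrarily permuting; $\mathrm{BinomialMax}_\eta(g,\mathcal D)=\mathbb E_{z\sim\mathrm{Bin}(m,1-\eta)}\mathbb E_{S\sim\mathcal D^{z}}[\sup_{S'\in\mathrm{complete}_m(S)}\mathbb E[g(S')]]$. *)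

From HB Require Import structures.
From mathcomp Require Import all_boot all_order all_algebra.
From mathcomp Require Import all_classical all_reals all_analysis.
Set Implicit Arguments. Unset Strict Implicit. Unset Printing Implicit Defensive.
Import Order.TTheory GRing.Theory Num.Theory.
Local Open Scope classical_set_scope.
Local Open Scope ring_scope.

Section Defs.
Variable R : realType.
Variable X : countType.

Definition is_distribution (p : X -> R) : Prop :=
  (forall x, 0 <= p x) /\ (\esum_(x in [set: X]) (p x)%:E = 1)%E.

Definition prod_weight (p : X -> R) (k : nat) (S : k.-tuple X) : R :=
  \prod_(i < k) p (tnth S i).

Definition expect_iid (p : X -> R) (k : nat) (h : k.-tuple X -> \bar R) : \bar R :=
  (\esum_(S in [set: k.-tuple X]) ((prod_weight p S)%:E * h S))%E.

(* Phi_{m -> n}: a uniformly random sequence of n distinct indices of [m],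
   i.e. a uniformly random injection 'I_n -> 'I_m.  For a deterministic
   f : X^n -> {0,1}, phi_compose f S = E[(f o Phi_{m->n})(S)] = Pr[f'(S) = 1]. *)
Definition phi_compose (n m : nat) (f : n.-tuple X -> bool) (S : m.-tuple X) : R :=
  (#|[set s : {ffun 'I_n -> 'I_m} | injectiveb s]|%:R)^-1 *
  \sum_(s : {ffun 'I_n -> 'I_m} | injectiveb s)
     (f [tuple tnth S (s i) | i < n] : nat)%:R.

Definition n_added (eta : R) (m : nat) : nat := Num.truncn (eta * m%:R).
Definition n_clean (eta : R) (m : nat) : nat := `|Num.ceil ((1 - eta) * m%:R)|%N.

Definition add_pts (eta : R) (m : nat) (S : seq X) : set (m.-tuple X) :=
  [set S' | exists T : seq X, size T = n_added eta m /\ perm_eq S' (S ++ T)].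

Definition complete (m : nat) (S : seq X) : set (m.-tuple X) :=
  [set S' | exists T : seq X, size T = (m - size S)%N /\ perm_eq S' (S ++ T)].

(* A randomized g : X^m -> {0,1} is represented by gE S = E[g(S)] in [0,1]. *)
Definition AdaptiveAddMax (eta : R) (m : nat) (gE : m.-tuple X -> R) (p : X -> R)
  : \bar R :=
  expect_iid p (fun S : (n_clean eta m).-tuple X =>
    ereal_sup [set (gE S')%:E | S' in @add_pts eta m S]).

Definition BinomialMax (eta : R) (m : nat) (gE : m.-tuple X -> R) (p : X -> R)
  : \bar R :=
  (\sum_(z < m.+1)
     (('C(m, z))%:R * (1 - eta) ^+ z * eta ^+ (m - z))%:E *
     expect_iid p (fun S : z.-tuple X =>
       ereal_sup [set (gE S')%:E | S' in @complete m S]))%E.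

End Defs.

From HB Require Import structures.
From mathcomp Require Import all_boot all_order all_algebra.
From mathcomp Require Import all_classical all_reals all_analysis.
From mathcomp Require Import perm ring lra zify.
Set Implicit Arguments. Unset Strict Implicit. Unset Printing Implicit Defensive.
Import Order.TTheory GRing.Theory Num.Theory.

(* Write V(z) for the expectation, over S ~ D^z, of the supremum of g = f o Phi_{m->n} over
   all completions of S to m points.  Adding floor(eta m) points to a ceil((1 - eta) m)-sample
   is completing it, so AdaptiveAddMax = V(k) with k = ceil((1 - eta) m), while BinomialMax is
   the average of V(z) over z ~ Bin(m, 1 - eta).  The function g is symmetric, and changing d of
   its m inputs moves it by at most n d / m, because a uniformly random injection of n indices
   meets a fixed set of d indices with probability at most n d / m.  Hence V is (n/m)-Lipschitz
   and the gap is at most (n/m) E|k - z|.  Since |k - (1 - eta) m| <= 1 and Var z <= m / 4,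
   this is at most eps once m >= 2 n^2 / eps^2. *)

Definition ninj (n m : nat) : nat :=
  (\sum_(s : {ffun 'I_n -> 'I_m} | injectiveb s) 1)%N.

Lemma sum_ord_ltn m d : (d <= m)%N -> (\sum_(k < m) (k < d))%N = d.
Proof.
move=> le_dm; rewrite -(big_mkord xpredT (fun k => nat_of_bool (k < d)%N)).
rewrite (big_cat_nat (n := d)) //= big_nat_cond (eq_bigr (fun _ => 1%N)); last first.
  by move=> i /andP[/andP[_ ->]].
rewrite -big_nat_cond sum_nat_const_nat muln1 subn0 big_nat_cond big1 ?addn0 //.
by move=> i /andP[/andP[/leq_gtF -> _]].
Qed.

(* Translating an injection by k in Z/mZ is a bijection on injections; averaging over
   the m translations, each injection sends i below d exactly d times. *)
Lemma muln_sum_inj_ltn n m (i : 'I_n) d : (d <= m)%N ->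
  (m * \sum_(s : {ffun 'I_n -> 'I_m} | injectiveb s) (s i < d))%N = (d * ninj n m)%N.
Proof.
case: m => [|m] le_dm; first by move: le_dm; rewrite leqn0 => /eqP ->.
pose shift (k : 'I_m.+1) (s : {ffun 'I_n -> 'I_m.+1}) := [ffun x => (s x + k)%R].
have shift_inj k : injective (shift k).
  move=> s1 s2 /ffunP e; apply/ffunP => x; move: (e x); rewrite !ffunE; exact: addIr.
have injectiveb_shift k s : injectiveb (shift k s) = injectiveb s.
  apply/injectiveP/injectiveP => s_inj x y e; first by apply: s_inj; rewrite !ffunE e.
  by move: e; rewrite !ffunE => /(addIr k) /s_inj.
have sum_shift (k : 'I_m.+1) :
    (\sum_(s : {ffun 'I_n -> 'I_m.+1} | injectiveb s) (s i < d))%N =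
    (\sum_(s : {ffun 'I_n -> 'I_m.+1} | injectiveb s) ((s i + k)%R < d))%N.
  rewrite (reindex_inj (shift_inj k)) /=.
  by apply: eq_big => s; [exact: injectiveb_shift | rewrite ffunE].
rewrite -[X in (X * _)%N]card_ord -sum_nat_const (eq_bigr _ (fun k _ => sum_shift k)).
rewrite exchange_big /ninj big_distrr /=; apply: eq_bigr => s _.
rewrite muln1 -[RHS](sum_ord_ltn le_dm) [RHS](reindex_inj (addrI (s i))).
exact: eq_bigl.
Qed.

Local Open Scope classical_set_scope.
Local Open Scope ring_scope.

Section PhiCompose.
Variables (R : realType) (X : countType) (n m : nat) (f : n.-tuple X -> bool).
Local Notation g := (@phi_compose R X n m f).

Definition phi_count (A : m.-tuple X) : nat :=
  \sum_(s : {ffun 'I_n -> 'I_m} | injectiveb s) (f [tuple tnth A (s i) | i < n] : nat).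

Lemma phi_composeE A : g A = (ninj n m)%:R^-1 * (phi_count A)%:R.
Proof.
have card_inj : #|[set s : {ffun 'I_n -> 'I_m} | injectiveb s]%classic| = ninj n m.
  by rewrite /ninj -sum1_card; apply: eq_bigl => s; apply/idP/idP; rewrite in_setE.
by rewrite /phi_compose /phi_count card_inj !natr_sum.
Qed.

Lemma phi_count_le A : (phi_count A <= ninj n m)%N.
Proof. by apply: leq_sum => s _; case: f. Qed.

Lemma phi_compose_ge0 A : 0 <= g A.
Proof. by rewrite phi_composeE mulr_ge0 // invr_ge0. Qed.

Lemma phi_compose_le1 A : g A <= 1.
Proof.
rewrite phi_composeE; have [->|N0] := eqVneq (ninj n m) 0%N; first by rewrite invr0 mul0r.
by rewrite ler_pdivrMl ?ltr0n ?lt0n // mulr1 ler_nat phi_count_le.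
Qed.

Lemma phi_count_perm (A B : m.-tuple X) : perm_eq A B -> phi_count A = phi_count B.
Proof.
case/tuple_permP => sg eA; have {}eA : A = [tuple tnth B (sg i) | i < m] by exact: val_inj.
pose h (s : {ffun 'I_n -> 'I_m}) := [ffun i => sg (s i)].
have h_inj : injective h.
  by move=> s1 s2 /ffunP e; apply/ffunP => x; move: (e x); rewrite !ffunE => /perm_inj.
rewrite /phi_count [RHS](reindex_inj h_inj); apply: eq_big => s.
  apply/injectiveP/injectiveP => s_inj x y e.
    by move: e; rewrite !ffunE => /perm_inj /s_inj.
  by apply: s_inj; rewrite !ffunE e.
move=> _; congr (nat_of_bool (f _)); apply: eq_from_tnth => i.
by rewrite eA !tnth_map !tnth_ord_tuple ffunE.
Qed.

Lemma phi_compose_perm (A B : m.-tuple X) : perm_eq A B -> g A = g B.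
Proof. by move=> /phi_count_perm e; rewrite !phi_composeE e. Qed.

(* Union bound: an injection that avoids the first d indices reads the same entries of A and
   B, and by muln_sum_inj_ltn each of the n coordinates hits them for a fraction d/m. *)
Lemma phi_count_prefix (A B : m.-tuple X) d : (d <= m)%N ->
  (forall i : 'I_m, (d <= i)%N -> tnth A i = tnth B i) ->
  (m * phi_count A <= m * phi_count B + n * (d * ninj n m))%N.
Proof.
move=> le_dm eqAB.
have hits : (phi_count A <= phi_count B + \sum_(s : {ffun 'I_n -> 'I_m} | injectiveb s)
                 \sum_(i < n) (s i < d))%N.
  rewrite /phi_count -big_split /=; apply: leq_sum => s _.
  have [/existsP[i0 hi0]|] := boolP [exists i, (s i < d)%N].
    rewrite (bigD1 i0) //= hi0.
    by case: (f _) => //; case: (f _) => //=; rewrite addnC ltnS ?leq_addl.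
  rewrite negb_exists => /forallP avoid.
  suff -> : [tuple tnth A (s i) | i < n] = [tuple tnth B (s i) | i < n] by rewrite leq_addr.
  apply: eq_from_tnth => i; rewrite !tnth_map !tnth_ord_tuple.
  by apply: eqAB; rewrite leqNgt avoid.
rewrite exchange_big /= in hits.
have <- : (m * \sum_(i < n)
    \sum_(s : {ffun 'I_n -> 'I_m} | injectiveb s) (s i < d) = n * (d * ninj n m))%N.
  rewrite big_distrr /= (eq_bigr (fun _ => d * ninj n m)%N) => [|i _].
    by rewrite sum_nat_const card_ord.
  exact: muln_sum_inj_ltn.
by rewrite -mulnDr leq_mul2l hits orbT.
Qed.

Lemma phi_compose_prefix (A B : m.-tuple X) d : (d <= m)%N ->
  (forall i : 'I_m, (d <= i)%N -> tnth A i = tnth B i) ->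
  g A <= g B + n%:R / m%:R * d%:R.
Proof.
move=> le_dm eqAB; have count_le := phi_count_prefix le_dm eqAB.
have [d0|d_gt0] := posnP d.
  suff -> : A = B by rewrite d0 mulr0 addr0.
  by apply: eq_from_tnth => i; apply: eqAB; rewrite d0.
have m_gt0 : (0 : R) < m%:R by rewrite ltr0n (leq_trans d_gt0).
rewrite !phi_composeE; have [->|N0] := eqVneq (ninj n m) 0%N.
  by rewrite invr0 !mul0r add0r mulr_ge0 // divr_ge0.
have N_gt0 : (0 : R) < (ninj n m)%:R by rewrite ltr0n lt0n.
rewrite -(ler_pM2l N_gt0) mulrDr !mulrA mulfV ?gt_eqF // !mul1r.
rewrite -(ler_pM2l m_gt0) mulrDr.
have -> : m%:R * ((ninj n m)%:R * n%:R / m%:R * d%:R) =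
          n%:R * (d%:R * (ninj n m)%:R) :> R by field; rewrite gt_eqF.
by rewrite -!natrM -natrD ler_nat.
Qed.

End PhiCompose.

Lemma ge0_mule_esumr (R : realType) (T : choiceType) (I : set T) (r : R) (a : T -> \bar R) :
  0 <= r -> (forall x, 0 <= a x)%E ->
  (r%:E * (\esum_(x in I) a x) = \esum_(x in I) r%:E * a x)%E.
Proof.
move=> r0 a0; rewrite /esum -ereal_supZl //; last first.
  by apply/set0P; exists 0%E; exists set0; [exact: fsets_set0|rewrite fsbig_set0].
congr ereal_sup; apply/seteqP; split=> y /=.
  by case=> _ [A HA <-] <-; exists A => //; rewrite ge0_mule_fsumr.
by case=> A HA <-; exists (\sum_(x \in A) a x)%E; [exists A|rewrite ge0_mule_fsumr].
Qed.

Section ExpectIID.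
Variables (R : realType) (X : countType) (p : X -> R).
Hypothesis p_distr : is_distribution p.

Lemma prod_weight_ge0 k (S : k.-tuple X) : 0 <= prod_weight p S.
Proof. by apply: prodr_ge0 => i _; case: p_distr. Qed.

Lemma prod_weight_cons k x (t : k.-tuple X) :
  prod_weight p [tuple of x :: t] = p x * prod_weight p t.
Proof.
by rewrite /prod_weight big_ord_recl tnth0; congr (_ * _); apply: eq_bigr => i _; rewrite tnthS.
Qed.

Definition expect k (h : k.-tuple X -> R) : \bar R := expect_iid p (fun S => (h S)%:E).

Lemma expect_ge0 k (h : k.-tuple X -> R) : (forall S, 0 <= h S) -> (0 <= expect h)%E.
Proof.
by move=> h0; apply: esum_ge0 => S _; rewrite -EFinM lee_fin mulr_ge0 ?prod_weight_ge0.
Qed.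

(* The first coordinate integrates out because p has total mass 1. *)
Lemma expect_behead k (h : k.-tuple X -> R) : (forall S, 0 <= h S) ->
  expect (fun S : k.+1.-tuple X => h [tuple of behead S]) = expect h.
Proof.
move=> h0; rewrite /expect /expect_iid.
rewrite (reindex_esum (setT `*`` (fun _ => setT)) _
   (fun xt : k.-tuple X * X => [tuple of xt.2 :: xt.1])); last first.
  split.
  - by move=> xt _.
  - by move=> [t1 x1] [t2 x2] _ _ /= /(congr1 val) /= [-> /val_inj ->].
  - by move=> S _; exists (behead_tuple S, thead S) => //=; rewrite [RHS]tuple_eta.
rewrite -(@esum_esum _ _ _ setT (fun _ => setT) (fun (t : k.-tuple X) (x : X) =>
   ((prod_weight p [tuple of x :: t])%:E * (h (behead_tuple [tuple of x :: t]))%:E)%E));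
  last by move=> t x _ _; rewrite -EFinM lee_fin mulr_ge0 ?prod_weight_ge0.
apply: eq_esum => t _.
have behead_cons x : behead_tuple [tuple of x :: t] = t by exact: val_inj.
rewrite (eq_esum (b := fun x => ((prod_weight p t * h t)%:E * (p x)%:E)%E)); last first.
  move=> x _; rewrite behead_cons prod_weight_cons -!EFinM.
  by congr (_%:E); rewrite [RHS]mulrC mulrA.
rewrite -ge0_mule_esumr ?mulr_ge0 ?prod_weight_ge0 //; last first.
  by move=> x; rewrite lee_fin; case: p_distr.
by case: p_distr => _ ->; rewrite mule1 EFinM.
Qed.

Lemma expect_tuple0 (h : 0.-tuple X -> R) : (forall S, 0 <= h S) ->
  expect h = (h [tuple])%:E.
Proof.
move=> h0; rewrite /expect /expect_iid; have -> : [set: 0.-tuple X] = [set [tuple]].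
  by apply/seteqP; split=> t //= _; rewrite [t]tuple0.
by rewrite esum_set1 /prod_weight big_ord0 ?mul1e // lee_fin.
Qed.

Lemma expect_cst k c : 0 <= c -> expect (fun _ : k.-tuple X => c) = c%:E.
Proof.
move=> c0; elim: k => [|k IH]; first exact: (expect_tuple0 (h := fun _ => c)).
by rewrite -IH; exact: (expect_behead (h := fun _ : k.-tuple X => c)).
Qed.

Lemma expect_le_addr k (g h : k.-tuple X -> R) c : 0 <= c -> (forall S, 0 <= h S) ->
  (forall S, g S <= h S + c) -> (expect g <= expect h + c%:E)%E.
Proof.
move=> c0 h0 gh; rewrite -[X in (_ + X)%E](expect_cst k c0) /expect /expect_iid -esumD;
  try by move=> S _; rewrite -EFinM lee_fin mulr_ge0 ?prod_weight_ge0.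
apply: le_esum => S _; rewrite -!EFinM -EFinD lee_fin -mulrDr.
by rewrite ler_wpM2l ?prod_weight_ge0.
Qed.

Lemma expect_drop (H : seq X -> R) z m : (z <= m)%N -> (forall s, 0 <= H s) ->
  expect (fun S : z.-tuple X => H S) = expect (fun S : m.-tuple X => H (drop (m - z) S)).
Proof.
move=> + H0; elim: m => [|m IH] le_zm.
  by move: le_zm; rewrite leqn0 => /eqP ->; apply: eq_esum => S _; rewrite drop0.
move: le_zm; rewrite leq_eqVlt ltnS => /orP[/eqP ->|le_zm].
  by rewrite subnn; apply: eq_esum => S _; rewrite drop0.
rewrite IH // -(expect_behead (h := fun S : m.-tuple X => H (drop (m - z) S))) //.
by apply: eq_esum => S _; rewrite subSn //; case: S => [[|x s]].
Qed.

End ExpectIID.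

Section Binomial.
Variables (R : realFieldType) (q e : R).
Hypotheses (qe : q + e = 1) (q_ge0 : 0 <= q) (e_ge0 : 0 <= e).

Definition bin_pmf (m z : nat) : R := 'C(m, z)%:R * q ^+ z * e ^+ (m - z).

Lemma bin_pmf_ge0 m z : 0 <= bin_pmf m z.
Proof. by rewrite /bin_pmf !mulr_ge0 // exprn_ge0. Qed.

Lemma sum_bin_pmf m : \sum_(z < m.+1) bin_pmf m z = 1.
Proof.
have := exprDn e q m; rewrite addrC qe expr1n => ->.
by apply: eq_bigr => z _; rewrite /bin_pmf -mulr_natl; ring.
Qed.

Lemma sum_bin_pmf_mulnr m (h : nat -> R) :
  \sum_(z < m.+2) bin_pmf m.+1 z * (z%:R * h z) =
  m.+1%:R * q * \sum_(z < m.+1) bin_pmf m z * h z.+1.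
Proof.
rewrite big_ord_recl /= mul0r mulr0 add0r mulr_sumr; apply: eq_bigr => z _.
rewrite /bin_pmf /bump /= add1n subSS exprS.
have bin_diag : m.+1%:R * 'C(m, z)%:R = z.+1%:R * 'C(m.+1, z.+1)%:R :> R.
  by rewrite -!natrM mul_bin_diag.
transitivity (z.+1%:R * 'C(m.+1, z.+1)%:R * q * q ^+ z * e ^+ (m - z) * h z.+1); first ring.
by rewrite -bin_diag; ring.
Qed.

Lemma bin_mean m : \sum_(z < m.+1) bin_pmf m z * z%:R = m%:R * q.
Proof.
case: m => [|m]; first by rewrite big_ord1 mulr0 mul0r.
rewrite (eq_bigr (fun z : 'I_m.+2 => bin_pmf m.+1 z * (z%:R * 1))) => [|z _]; last first.
  by rewrite mulr1.
rewrite (sum_bin_pmf_mulnr m (fun _ => 1)).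
by under eq_bigr do rewrite mulr1; rewrite sum_bin_pmf mulr1.
Qed.

Lemma bin_second_moment m :
  \sum_(z < m.+1) bin_pmf m z * z%:R ^+ 2 = m%:R * q * ((m%:R - 1) * q + 1).
Proof.
case: m => [|m]; first by rewrite big_ord1 !mul0r expr0n /= mulr0.
under eq_bigr do rewrite expr2.
rewrite (sum_bin_pmf_mulnr m (fun z => z%:R)); congr (_ * _).
under eq_bigr do rewrite -natr1 mulrDr mulr1.
by rewrite big_split /= bin_mean sum_bin_pmf -natr1 addrK.
Qed.

Lemma bin_sq_dev m (k : R) :
  \sum_(z < m.+1) bin_pmf m z * (k - z%:R) ^+ 2 = (k - m%:R * q) ^+ 2 + m%:R * q * e.
Proof.
rewrite (eq_bigr (fun z : 'I_m.+1 => k ^+ 2 * bin_pmf m z + (- (2 * k)) * (bin_pmf m z * z%:R)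
   + bin_pmf m z * z%:R ^+ 2)); last by move=> z _; ring.
rewrite !big_split /= -!mulr_sumr sum_bin_pmf bin_mean bin_second_moment.
have -> : e = 1 - q by rewrite -qe addrC addKr.
ring.
Qed.

(* AM-GM: [|x| <= (x^2 + t^2) / (2 t)], then the second moment about k. *)
Lemma bin_abs_dev_le m (k t : R) : 0 < t ->
  \sum_(z < m.+1) bin_pmf m z * `|k - z%:R| <=
  ((k - m%:R * q) ^+ 2 + m%:R * q * e + t ^+ 2) / (2 * t).
Proof.
move=> t_gt0; rewrite -bin_sq_dev.
have -> : t ^+ 2 = \sum_(z < m.+1) bin_pmf m z * t ^+ 2 by rewrite -mulr_suml sum_bin_pmf mul1r.
rewrite -big_split /= mulr_suml; apply: ler_sum => z _.
rewrite -mulrDr -mulrA ler_wpM2l ?bin_pmf_ge0 // ler_pdivlMr ?mulr_gt0 //.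
have := sqr_ge0 (`|k - z%:R| - t); rewrite -[(k - z%:R) ^+ 2](real_normK (num_real _)).
nra.
Qed.

Lemma bin_lipschitz_gap (r : nat -> R) (L : R) m k : (k <= m)%N ->
  (forall a b, (a <= m)%N -> (b <= m)%N -> `|r a - r b| <= L * `|a%:R - b%:R|) ->
  `|r k - \sum_(z < m.+1) bin_pmf m z * r z| <= L * \sum_(z < m.+1) bin_pmf m z * `|k%:R - z%:R|.
Proof.
move=> le_km r_lip.
have -> : r k = \sum_(z < m.+1) bin_pmf m z * r k by rewrite -mulr_suml sum_bin_pmf mul1r.
rewrite -sumrB mulr_sumr.
apply: le_trans (ler_norm_sum _ _ _) _; apply: ler_sum => z _.
rewrite -mulrBr normrM ger0_norm ?bin_pmf_ge0 // mulrCA ler_wpM2l ?bin_pmf_ge0 //.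
by apply: r_lip; rewrite // -ltnS.
Qed.

(* Choosing t = eps m / n in bin_abs_dev_le balances the two terms. *)
Lemma bin_scaled_abs_dev_le m n (eps k : R) : 0 < eps ->
  (k - m%:R * q) ^+ 2 <= 1 -> 2 * n%:R ^+ 2 <= eps ^+ 2 * m%:R ->
  n%:R / m%:R * \sum_(z < m.+1) bin_pmf m z * `|k - z%:R| <= eps.
Proof.
move=> eps_gt0 k_dev hm; have [->|n_gt0] := posnP n; first by rewrite !mul0r ltW.
have nR : (0 : R) < n%:R by rewrite ltr0n.
have n2 : (1 : R) <= n%:R ^+ 2 by rewrite -natrX ler1n expn_gt0 n_gt0.
have mR : (0 : R) < m%:R.
  have : 0 < eps ^+ 2 * m%:R by lra.
  by rewrite (pmulr_rgt0 _ (exprn_gt0 2 eps_gt0)).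
have m1 : (1 : R) <= m%:R by rewrite ler1n -(ltr0n R).
set t := eps * m%:R / n%:R; have t_gt0 : 0 < t by rewrite divr_gt0 ?mulr_gt0.
apply: le_trans (ler_wpM2l _ (bin_abs_dev_le m k t_gt0)) _; first by rewrite divr_ge0.
have qe_le : q * e <= 1 / 4.
  have : (q + e) ^+ 2 = 1 by rewrite qe expr1n.
  by have := sqr_ge0 (q - e); nra.
set V := (k - m%:R * q) ^+ 2 + m%:R * q * e.
have V_le : V <= 1 + m%:R / 4.
  have : m%:R * (q * e) <= m%:R * (1 / 4) by rewrite ler_wpM2l // ltW.
  by rewrite /V; lra.
have -> : n%:R / m%:R * ((V + t ^+ 2) / (2 * t)) =
          n%:R ^+ 2 * V / (2 * eps * m%:R ^+ 2) + eps / 2.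
  by rewrite /t; field; rewrite !gt_eqF.
suff : n%:R ^+ 2 * V / (2 * eps * m%:R ^+ 2) <= eps / 2 by lra.
rewrite ler_pdivrMr ?mulr_gt0 ?exprn_gt0 //.
have : n%:R ^+ 2 * V <= n%:R ^+ 2 * (1 + m%:R / 4) by rewrite ler_wpM2l ?exprn_ge0.
nra.
Qed.

End Binomial.

Section CleanAdded.
Variables (R : realType) (eta : R) (m : nat).
Hypothesis eta01 : 0 <= eta <= 1.

Lemma n_clean_int : (n_clean eta m)%:Z = Num.ceil ((1 - eta) * m%:R).
Proof.
rewrite /n_clean gez0_abs // ceil_ge0; case/andP: eta01 => _ eta1.
by have := ler0n R m; nra.
Qed.

Lemma n_clean_itv : (n_clean eta m)%:R - 1 < (1 - eta) * m%:R <= (n_clean eta m)%:R.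
Proof. by have := ceil_itv ((1 - eta) * m%:R); rewrite -n_clean_int intrB. Qed.

Lemma n_clean_dev : ((n_clean eta m)%:R - m%:R * (1 - eta)) ^+ 2 <= 1.
Proof.
have /andP[lo hi] := n_clean_itv.
have : 0 <= (n_clean eta m)%:R - m%:R * (1 - eta) by rewrite mulrC; lra.
have : (n_clean eta m)%:R - m%:R * (1 - eta) <= 1 by rewrite mulrC; lra.
nra.
Qed.

Lemma n_clean_addn : (n_clean eta m + n_added eta m)%N = m.
Proof.
have /andP[c_lo c_hi] := n_clean_itv.
have /andP[a_lo a_hi] := truncn_itv (mulr_ge0 (proj1 (andP eta01)) (ler0n R m)).
rewrite -/(n_added eta m) in a_lo a_hi.
have lo : (m%:R : R) < (n_clean eta m + n_added eta m).+1%:R by rewrite -natr1 natrD; lra.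
have hi : ((n_clean eta m + n_added eta m)%:R : R) < m.+1%:R.
  by rewrite natrD -natr1 -natr1 in a_hi *; lra.
rewrite ltr_nat in lo; rewrite ltr_nat in hi; lia.
Qed.

Lemma n_clean_le : (n_clean eta m <= m)%N.
Proof. by rewrite -[leqRHS]n_clean_addn leq_addr. Qed.

End CleanAdded.

Section SupComplete.
Variables (R : realType) (X : countType) (m : nat) (g : m.-tuple X -> R) (L : R) (x0 : X).
Hypotheses (g_ge0 : forall A, 0 <= g A) (g_le1 : forall A, g A <= 1).
Hypothesis g_perm : forall A B : m.-tuple X, perm_eq A B -> g A = g B.
Hypothesis g_prefix : forall (A B : m.-tuple X) d, (d <= m)%N ->
  (forall i : 'I_m, (d <= i)%N -> tnth A i = tnth B i) -> g A <= g B + L * d%:R.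

Definition sup_complete (s : seq X) : \bar R :=
  ereal_sup [set (g S')%:E | S' in @complete X m s].

Lemma complete_nonempty s : (size s <= m)%N -> exists S' : m.-tuple X, @complete X m s S'.
Proof.
move=> le_sm; pose w := s ++ nseq (m - size s) x0.
have size_w : size w == m by rewrite size_cat size_nseq subnKC.
exists (insubd [tuple x0 | _ < m] w); exists (nseq (m - size s) x0).
by rewrite size_nseq insubdK.
Qed.

Lemma sup_complete_ge0 s : (size s <= m)%N -> (0 <= sup_complete s)%E.
Proof.
move=> /complete_nonempty [S' HS']; apply: (@le_trans _ _ (g S')%:E); first by rewrite lee_fin.
by apply: ereal_sup_ubound; exists S'.
Qed.

Lemma sup_complete_le1 s : (sup_complete s <= 1)%E.
Proof. by apply: ge_ereal_sup => _ [S' _ <-]; rewrite lee_fin. Qed.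

Lemma sup_completeE s : (size s <= m)%N -> sup_complete s = (fine (sup_complete s))%:E.
Proof.
by move=> /sup_complete_ge0; have := sup_complete_le1 s; case: (sup_complete s).
Qed.

(* For size s > m no completion exists and the supremum is -oo, whose [fine] is 0. *)
Lemma fine_sup_complete_ge0 s : 0 <= fine (sup_complete s).
Proof.
rewrite /sup_complete; have [le_sm|lt_ms] := leqP (size s) m.
  by rewrite -lee_fin -sup_completeE ?sup_complete_ge0.
suff -> : [set (g S')%:E | S' in @complete X m s] = set0 by rewrite ereal_sup0.
apply/seteqP; split => // y [S' [T [_ /perm_size]]].
by rewrite size_tuple size_cat => e; move: lt_ms; rewrite ltnNge e leq_addr.
Qed.

Lemma fine_sup_complete_le1 s : fine (sup_complete s) <= 1.
Proof. by have := sup_complete_le1 s; case: (sup_complete s) => //= r; rewrite lee_fin. Qed.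

Lemma sup_complete_cat_le u v : (size u + size v <= m)%N ->
  (sup_complete (u ++ v) <= sup_complete v)%E.
Proof.
move=> le_m; apply: ge_ereal_sup => _ [S' [T [size_T perm_S']] <-].
apply: ereal_sup_ubound; exists S' => //; exists (u ++ T); split.
  by rewrite size_cat size_T size_cat; lia.
by rewrite (permPl perm_S') -catA perm_catCA.
Qed.

(* A completion of v is rearranged so that the first |u| of its padding points come first;
   replacing them by u gives a completion of u ++ v and moves g by at most L |u|. *)
Lemma sup_complete_le_cat u v : (size u + size v <= m)%N ->
  (sup_complete v <= sup_complete (u ++ v) + (L * (size u)%:R)%:E)%E.
Proof.
move=> le_m; apply: ge_ereal_sup => _ [S' [T [size_T perm_S']] <-].
set d := size u; set T1 := take d T; set T2 := drop d T.
have size_T1 : size T1 = d by rewrite size_take_min; lia.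
have size_T2 : size T2 = (size T - d)%N by rewrite size_drop.
have size_Q : size (T1 ++ v ++ T2) == m by rewrite !size_cat size_T1 size_T2 size_T; lia.
have size_S2 : size (u ++ v ++ T2) == m by rewrite !size_cat size_T2 size_T; lia.
pose Q := insubd S' (T1 ++ v ++ T2); pose S2 := insubd S' (u ++ v ++ T2).
have val_Q : val Q = T1 ++ v ++ T2 by rewrite insubdK.
have val_S2 : val S2 = u ++ v ++ T2 by rewrite insubdK.
have gQ : g S' = g Q.
  apply: g_perm; rewrite (permPl perm_S') val_Q -[X in v ++ X](cat_take_drop d T).
  by rewrite perm_catCA.
have gS2 : g Q <= g S2 + L * d%:R.
  apply: g_prefix; first lia.
  by move=> i le_di; rewrite !(tnth_nth x0) val_Q val_S2 !nth_cat size_T1 /d ltnNge le_di.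
have S2_complete : ((g S2)%:E <= sup_complete (u ++ v))%E.
  apply: ereal_sup_ubound; exists S2 => //; exists T2; split.
    by rewrite size_T2 size_T size_cat; lia.
  by rewrite val_S2 catA.
rewrite gQ; apply: (@le_trans _ _ ((g S2)%:E + (L * d%:R)%:E)%E).
  by rewrite -EFinD lee_fin.
by rewrite leeD2r.
Qed.

Variable p : X -> R.
Hypotheses (p_distr : is_distribution p) (L_ge0 : 0 <= L).

Definition mean_sup_complete z : R :=
  fine (expect p (fun S : z.-tuple X => fine (sup_complete S))).

Lemma mean_sup_completeE z :
  expect p (fun S : z.-tuple X => fine (sup_complete S)) = (mean_sup_complete z)%:E.
Proof.
have := expect_ge0 p_distr (fun S : z.-tuple X => fine_sup_complete_ge0 S).
have le1 (S : z.-tuple X) : fine (sup_complete S) <= 0 + 1.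
  by rewrite add0r fine_sup_complete_le1.
have := expect_le_addr p_distr ler01 (fun _ => lexx 0) le1.
by rewrite expect_cst // add0e /mean_sup_complete; case: (expect _ _).
Qed.

Lemma mean_sup_complete_diff a b : (a <= b)%N -> (b <= m)%N ->
  mean_sup_complete b <= mean_sup_complete a <= mean_sup_complete b + L * (b - a)%:R.
Proof.
move=> le_ab le_bm.
(* Both means are read off one m-sample, whose last z entries form the z-sample. *)
have key (S : m.-tuple X) :
  fine (sup_complete (drop (m - b) S)) <= fine (sup_complete (drop (m - a) S)) + 0 /\
  fine (sup_complete (drop (m - a) S)) <=
    fine (sup_complete (drop (m - b) S)) + L * (b - a)%:R.
  set u := take (b - a) (drop (m - b) S); set v := drop (m - a) S.
  have -> : drop (m - b) S = u ++ v.
    by rewrite -[LHS](cat_take_drop (b - a)) drop_drop; congr (_ ++ drop _ _); lia.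
  have size_u : size u = (b - a)%N by rewrite size_take size_drop size_tuple; case: ifP; lia.
  have size_v : size v = a by rewrite size_drop size_tuple; lia.
  have le_uv : (size u + size v <= m)%N by rewrite size_u size_v; lia.
  rewrite -!lee_fin !EFinD -!sup_completeE ?size_cat //; last by lia.
  by rewrite addr0 -size_u; split; [exact: sup_complete_cat_le | exact: sup_complete_le_cat].
have law z : (z <= m)%N -> expect p (fun S : z.-tuple X => fine (sup_complete S)) =
    expect p (fun S : m.-tuple X => fine (sup_complete (drop (m - z) S))).
  move=> le_zm; apply: (expect_drop p_distr (H := fun s => fine (sup_complete s))) => //.
  exact: fine_sup_complete_ge0.
have mean_b_le := expect_le_addr p_distr (lexx 0)
  (fun S => fine_sup_complete_ge0 _) (fun S => (key S).1).
have mean_a_le := expect_le_addr p_distr (mulr_ge0 L_ge0 (ler0n _ (b - a)))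
  (fun S => fine_sup_complete_ge0 _) (fun S => (key S).2).
rewrite -!law ?(leq_trans le_ab) // !mean_sup_completeE -EFinD lee_fin in mean_a_le mean_b_le.
by rewrite addr0 lee_fin in mean_b_le; rewrite mean_b_le mean_a_le.
Qed.

Lemma mean_sup_complete_lipschitz a b : (a <= m)%N -> (b <= m)%N ->
  `|mean_sup_complete a - mean_sup_complete b| <= L * `|a%:R - b%:R|.
Proof.
wlog le_ab : a b / (a <= b)%N => [wlog_ab|_ le_bm].
  have [/wlog_ab //|/ltnW le_ba le_am le_bm] := leqP a b.
  by rewrite distrC [`|a%:R - _|]distrC wlog_ab.
have /andP[lo hi] := mean_sup_complete_diff le_ab le_bm.
rewrite ger0_norm ?subr_ge0 // distrC ger0_norm ?subr_ge0 ?ler_nat // -natrB //.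
lra.
Qed.

Lemma AdaptiveAddMaxE eta : 0 <= eta <= 1 ->
  AdaptiveAddMax eta g p = (mean_sup_complete (n_clean eta m))%:E.
Proof.
move=> eta01; rewrite /AdaptiveAddMax -mean_sup_completeE.
apply: eq_esum => S _; congr (_ * _)%E.
have added : (m - n_clean eta m)%N = n_added eta m by rewrite -{1}(n_clean_addn m eta01) addKn.
rewrite -sup_completeE ?size_tuple ?n_clean_le //.
by rewrite /sup_complete /add_pts /complete size_tuple added.
Qed.

Lemma BinomialMaxE eta : BinomialMax eta g p =
  (\sum_(z < m.+1) bin_pmf (1 - eta) eta m z * mean_sup_complete z)%:E.
Proof.
rewrite /BinomialMax -sumEFin; apply: eq_bigr => z _.
rewrite [RHS]EFinM -mean_sup_completeE; congr (_ * _)%E.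
apply: eq_esum => S _; congr (_ * _)%E.
by rewrite -sup_completeE // size_tuple -ltnS.
Qed.

End SupComplete.

Lemma distribution_inhabited (R : realType) (X : countType) (p : X -> R) :
  is_distribution p -> inhabited X.
Proof.
case=> _ mass1; apply: contrapT => noX.
have setT0 : [set: X] = set0 by apply/seteqP; split=> // x _; apply: noX.
by move: mass1; rewrite setT0 esum_set0 => /eqP; rewrite eq_sym eqe oner_eq0.
Qed.

Theorem mainTheorem18 (R : realType) :
  exists C : R, 0 < C /\
  forall (X : countType) (n : nat) (f : n.-tuple X -> bool) (eps eta : R)
         (p : X -> R) (m : nat),
    0 < eps < 1 -> 0 < eta < 1 -> is_distribution p ->
    C * (n%:R ^+ 2) / (eps ^+ 2) <= m%:R ->
    (`| AdaptiveAddMax eta (@phi_compose R X n m f) p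
        - BinomialMax eta (@phi_compose R X n m f) p | <= eps%:E)%E.
Proof.
exists 2; split => // X n f eps eta p m /andP[eps_gt0 _] /andP[eta_gt0 eta_lt1] p_distr hm.
have [x0] := distribution_inhabited p_distr.
have eta01 : 0 <= eta <= 1 by rewrite !ltW.
have g_ge0 := @phi_compose_ge0 R X n m f; have g_le1 := @phi_compose_le1 R X n m f.
rewrite (AdaptiveAddMaxE x0 g_ge0 g_le1 p_distr eta01) (BinomialMaxE x0 g_ge0 g_le1 p_distr).
rewrite -EFinB abse_EFin lee_fin.
have qe : (1 - eta) + eta = 1 by rewrite subrK.
have [q_ge0 e_ge0] : 0 <= 1 - eta /\ 0 <= eta by rewrite subr_ge0 !ltW.
apply: le_trans (bin_lipschitz_gap qe q_ge0 e_ge0 (L := n%:R / m%:R) (n_clean_le m eta01) _) _.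
  apply: (mean_sup_complete_lipschitz x0 g_ge0 g_le1 (@phi_compose_perm R X n m f)
           (@phi_compose_prefix R X n m f)) => //.
apply: bin_scaled_abs_dev_le => //; first exact: n_clean_dev.
by move: hm; rewrite ler_pdivrMr ?exprn_gt0 // [_ * eps ^+ 2]mulrC.
Qed.
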